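(* Let $\mathcal{M}$ be a $W^*$-algebra, $p\in\mathcal{M}$ a projection and $u\in\mathcal{M}$ a unitary. The set $\mathcal{S}_{\langle p,u\rangle}$ of all finite products of $p$, $u$ and $u^*$ is an inverse semigroup if and only if $[p,u^kpu^{*k}]=0$ for all $k\in\mathbb{N}$.
   Context: $[a,b]=ab-ba$. An inverse semigroup is a semigroup in which each $s$ has a unique $t$ with $sts=s$, $tst=t$. *)

From HB Require Import structures.
From mathcomp Require Import all_boot all_order all_algebra.
From mathcomp Require Import complex.
Set Implicit Arguments. Unset Strict Implicit. Unset Printing Implicit Defensive.
Import Order.TTheory GRing.Theory Num.Theory.
Local Open Scope ring_scope.

Definition star_algebra (R : rcfType) (M : lalgType (complex R)) (adj : M -> M) : Prop :=
  [/\ involutive adj,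
      forall x y : M, adj (x + y) = adj x + adj y,
      forall (a : complex R) (x : M), adj (a *: x) = (a^*)%C *: adj x,
      forall x y : M, adj (x * y) = adj y * adj x
    & adj 1 = 1].

Definition projection_elt (M : nzRingType) (adj : M -> M) (p : M) : Prop :=
  p * p = p /\ adj p = p.

Definition unitary_elt (M : nzRingType) (adj : M -> M) (u : M) : Prop :=
  u * adj u = 1 /\ adj u * u = 1.

Definition ring_commutator (M : nzRingType) (a b : M) : M := a * b - b * a.

Definition gen_semigroup (M : nzRingType) (adj : M -> M) (p u : M) : M -> Prop :=
  fun x => exists w : seq M,
    [/\ (0 < size w)%N, {subset w <= [:: p; u; adj u]} & x = \prod_(y <- w) y].

Definition inverse_semigroup (M : nzRingType) (S : M -> Prop) : Prop :=
  (forall x y, S x -> S y -> S (x * y)) /\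
  (forall s, S s -> exists! t, S t /\ s * t * s = s /\ t * s * t = t).

From mathcomp Require Import all_boot all_order all_algebra.
From mathcomp Require Import complex.
Import GRing.Theory.
Local Open Scope ring_scope.
Set Implicit Arguments. Unset Strict Implicit. Unset Printing Implicit Defensive.

(* An inverse semigroup is exactly a regular semigroup whose idempotents commute.
   If S = S_<p,u> is inverse, then p and u^k p u^*k are idempotents of S, so they commute.
   Conversely, every word in p, u, u^* can be rewritten as f v with v a power of u or u^*
   and f a product of conjugates v p v^*; the hypothesis (conjugated by powers of u) makes
   these conjugates pairwise commuting projections, so f is a projection.  Then s^* is an
   inverse of s = f v, and an idempotent f v of S must satisfy f v = f, so the idempotents
   of S are such products f and commute. *)

Section InverseSemigroup.
Variables (M : nzRingType) (S : M -> Prop).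

Definition semigroup_inverse (s t : M) : Prop := s * t * s = s /\ t * s * t = t.

Lemma idem_semigroup_inverse (e : M) : e * e = e -> semigroup_inverse e e.
Proof. by move=> ee; rewrite /semigroup_inverse !ee. Qed.

Section InverseSemigroupTheory.
Hypothesis invS : inverse_semigroup S.

Lemma inverse_semigroup_inverse_uniq (s t1 t2 : M) : S s -> S t1 -> S t2 ->
  semigroup_inverse s t1 -> semigroup_inverse s t2 -> t1 = t2.
Proof.
move=> Ss St1 St2 inv1 inv2; have [t [_ t_uniq]] := invS.2 s Ss.
by rewrite -(t_uniq t1) ?(t_uniq t2).
Qed.

Lemma inverse_semigroup_mul_idem (e f : M) : S e -> S f ->
  e * e = e -> f * f = f -> e * f * (e * f) = e * f.
Proof.
move=> Se Sf ee ff; have Sef := invS.1 e f Se Sf.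
have [b [[Sb [efbef bb_ef]] _]] := invS.2 _ Sef.
have Sfbe : S (f * b * e) by apply: invS.1 => //; apply: invS.1.
(* [f b e] is another inverse of [e f], so it equals [b]; hence [b] is idempotent. *)
have b_fbe : b = f * b * e.
  apply: (inverse_semigroup_inverse_uniq Sef) => //; split.
    by rewrite !mulrA -(mulrA e f f) ff -(mulrA _ e e) ee -[RHS]efbef !mulrA.
  rewrite !mulrA -(mulrA _ e e) ee -(mulrA _ f f) ff.
  by rewrite -(mulrA (f * b) e f) -(mulrA f b) -(mulrA f _ b) bb_ef.
have bb : b * b = b.
  rewrite {1 2}b_fbe !mulrA -(mulrA (f * b) e f) -(mulrA f b) -(mulrA f _ b) bb_ef.
  by rewrite -b_fbe.
have -> : e * f = b.
  by apply: (inverse_semigroup_inverse_uniq Sb) => //; apply: idem_semigroup_inverse.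
exact: bb.
Qed.

Lemma inverse_semigroup_idem_comm (e f : M) : S e -> S f ->
  e * e = e -> f * f = f -> e * f = f * e.
Proof.
move=> Se Sf ee ff; have efef := inverse_semigroup_mul_idem Se Sf ee ff.
have fefe := inverse_semigroup_mul_idem Sf Se ff ee.
(* both [e f] and [f e] are inverses of [e f] *)
apply: (@inverse_semigroup_inverse_uniq (e * f)); try exact: invS.1.
  exact: idem_semigroup_inverse.
split.
  by rewrite !mulrA -(mulrA _ f f) ff -(mulrA _ e e) ee -[RHS]efef !mulrA.
by rewrite !mulrA -(mulrA _ e e) ee -(mulrA _ f f) ff -[RHS]fefe !mulrA.
Qed.
End InverseSemigroupTheory.

Lemma regular_inverse_semigroup :
  (forall x y, S x -> S y -> S (x * y)) ->
  (forall s, S s -> exists2 t, S t & semigroup_inverse s t) ->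
  (forall e f, S e -> S f -> e * e = e -> f * f = f -> e * f = f * e) ->
  inverse_semigroup S.
Proof.
move=> mulS regS idem_comm; split=> // s Ss.
have [t St [sts tst]] := regS s Ss; exists t; split=> // t' [St' [st's t'st']].
have idem_of x y : x * y * x = x -> x * y * (x * y) = x * y.
  by move=> xyx; rewrite mulrA xyx.
have ts_t's : t * s * (t' * s) = t' * s * (t * s).
  by apply: idem_comm; [apply: mulS | apply: mulS | apply: idem_of | apply: idem_of].
have st_st' : s * t * (s * t') = s * t' * (s * t).
  by apply: idem_comm; [apply: mulS | apply: mulS | apply: idem_of | apply: idem_of].
have t_t'st : t = t' * s * t.
  transitivity (t * s * (t' * s) * t).
    by rewrite -(mulrA t s) (mulrA s t' s) st's tst.
  by rewrite ts_t's -(mulrA (t' * s) (t * s) t) tst.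
have t'_t'st : t' = t' * s * t.
  transitivity (t' * (s * t) * (s * t')).
    by rewrite mulrA -(mulrA t' (s * t) s) sts t'st'.
  by rewrite -mulrA st_st' !mulrA t'st'.
by rewrite t_t'st -t'_t'st.
Qed.
End InverseSemigroup.

Lemma ring_commutator_eq0 (M : nzRingType) (a b : M) :
  ring_commutator a b = 0 <-> a * b = b * a.
Proof. by rewrite /ring_commutator; split=> [/eqP|->]; rewrite ?subrr // subr_eq0 => /eqP. Qed.

Lemma expr_mul_cancel (M : nzRingType) (a b : M) (n m : nat) : a * b = 1 ->
  exists k, a ^+ n * b ^+ m = a ^+ k \/ a ^+ n * b ^+ m = b ^+ k.
Proof.
move=> ab; elim: m n => [|m IH] n; first by exists n; left; rewrite mulr1.
case: n => [|n]; first by exists m.+1; right; rewrite mul1r.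
by rewrite exprSr exprS mulrA -(mulrA _ a b) ab mulr1.
Qed.

Lemma mulr_inv1K (M : nzRingType) (a b x : M) : a * b = 1 -> x * a * b = x.
Proof. by move=> ab; rewrite -mulrA ab mulr1. Qed.

Lemma mulr_idemK (M : nzRingType) (e x : M) : e * e = e -> x * e * e = x * e.
Proof. by move=> ee; rewrite -mulrA ee. Qed.

Section ProductClosure.
Variables (M : nzRingType) (Q : M -> Prop).

Inductive prod_closure : M -> Prop :=
  | prod_closure1 : prod_closure 1
  | prod_closureMl q f : Q q -> prod_closure f -> prod_closure (q * f).

Lemma prod_closure_gen q : Q q -> prod_closure q.
Proof. by move=> Qq; rewrite -[q]mulr1; apply: prod_closureMl => //; apply: prod_closure1. Qed.

Lemma prod_closureM f g : prod_closure f -> prod_closure g -> prod_closure (f * g).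
Proof.
elim=> [|q f' Qq _ IH] Fg; first by rewrite mul1r.
by rewrite -mulrA; apply: prod_closureMl => //; apply: IH.
Qed.

Lemma prod_closure_morph (phi : M -> M) : {morph phi : x y / x * y} -> phi 1 = 1 ->
  (forall q, Q q -> Q (phi q)) -> forall f, prod_closure f -> prod_closure (phi f).
Proof.
move=> phiM phi1 phiQ f; elim=> [|q f' Qq _ IH]; first by rewrite phi1; apply: prod_closure1.
by rewrite phiM; apply: prod_closureMl => //; apply: phiQ.
Qed.

Hypothesis commQ : forall q1 q2, Q q1 -> Q q2 -> q1 * q2 = q2 * q1.

Lemma prod_closure_comm f g : prod_closure f -> prod_closure g -> f * g = g * f.
Proof.
have commQF q h : Q q -> prod_closure h -> q * h = h * q.
  move=> Qq; elim=> [|q' h' Qq' _ IH]; first by rewrite mul1r mulr1.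
  by rewrite mulrA (commQ Qq Qq') -mulrA IH mulrA.
elim=> [|q f' Qq _ IH] Fg; first by rewrite mul1r mulr1.
by rewrite -mulrA IH // !mulrA (commQF _ _ Qq Fg).
Qed.
End ProductClosure.

Section StarMonoid.
Variables (M : nzRingType) (adj : M -> M).
Hypotheses (adjK : involutive adj) (adjM : forall x y, adj (x * y) = adj y * adj x).
Hypothesis adj1 : adj 1 = 1.

Lemma adjX x n : adj (x ^+ n) = adj x ^+ n.
Proof. by elim: n => [|n IH]; rewrite ?expr0 ?adj1 // exprS adjM IH exprSr. Qed.

Lemma unitary1 : unitary_elt adj 1.
Proof. by rewrite /unitary_elt adj1 mulr1. Qed.

Lemma unitary_adj v : unitary_elt adj v -> unitary_elt adj (adj v).
Proof. by rewrite /unitary_elt adjK => -[]. Qed.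

Lemma unitaryM v w : unitary_elt adj v -> unitary_elt adj w -> unitary_elt adj (v * w).
Proof.
move=> [vv' v'v] [ww' w'w]; rewrite /unitary_elt adjM.
by rewrite !mulrA -(mulrA v w) ww' mulr1 vv' -(mulrA _ (adj v) v) v'v mulr1.
Qed.

Lemma unitaryX v n : unitary_elt adj v -> unitary_elt adj (v ^+ n).
Proof.
by move=> Uv; elim: n => [|n IH]; [rewrite expr0; apply: unitary1 | rewrite exprS; apply: unitaryM].
Qed.

Lemma unitary_conjM v x y : adj v * v = 1 ->
  v * (x * y) * adj v = v * x * adj v * (v * y * adj v).
Proof. by move=> v'v; rewrite !mulrA -(mulrA _ (adj v) v) v'v mulr1. Qed.

Lemma projection_unitary_conj v q : unitary_elt adj v -> projection_elt adj q ->
  projection_elt adj (v * q * adj v).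
Proof.
move=> [_ v'v] [qq adjq]; split; first by rewrite -unitary_conjM // qq.
by rewrite !adjM adjK adjq mulrA.
Qed.

Lemma prod_closure_projection (Q : M -> Prop) :
  (forall q, Q q -> projection_elt adj q) ->
  (forall q1 q2, Q q1 -> Q q2 -> q1 * q2 = q2 * q1) ->
  forall f, prod_closure Q f -> projection_elt adj f.
Proof.
move=> projQ commQ f; elim=> [|q f' Qq Ff' [ff' adjf']].
  by rewrite /projection_elt mulr1 adj1.
have [qq adjq] := projQ q Qq.
have qf' : q * f' = f' * q by apply: (prod_closure_comm commQ) => //; apply: prod_closure_gen.
split; last by rewrite adjM adjf' adjq qf'.
by rewrite -mulrA (mulrA f') -qf' -mulrA ff' mulrA qq.
Qed.

Section Generators.
Variables p u : M.
Local Notation S := (gen_semigroup adj p u).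

Lemma gen_semigroupM x y : S x -> S y -> S (x * y).
Proof.
move=> [w [w_gt0 sub_w ->]] [w' [w'_gt0 sub_w' ->]]; exists (w ++ w'); split.
- by rewrite size_cat addn_gt0 w_gt0.
- by move=> z; rewrite mem_cat => /orP [/sub_w | /sub_w'].
- by rewrite big_cat.
Qed.

Lemma gen_semigroup_gen x : x \in [:: p; u; adj u] -> S x.
Proof.
by move=> gen_x; exists [:: x]; split; rewrite ?big_seq1 // => z; rewrite inE => /eqP ->.
Qed.

Lemma gen_semigroup_ind (T : M -> Prop) : (forall x, x \in [:: p; u; adj u] -> T x) ->
  (forall x y, T x -> T y -> T (x * y)) -> forall x, S x -> T x.
Proof.
move=> Tgen TM x [w [w_gt0 sub_w ->]]; elim: w w_gt0 sub_w => [|y w IH] // _ sub_w.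
rewrite big_cons; have Ty := Tgen y (sub_w y (mem_head y w)).
case: w IH sub_w => [|z w] IH sub_w; first by rewrite big_nil mulr1.
by apply: TM Ty (IH _ _) => // t wt; apply/sub_w/mem_behead.
Qed.

Hypotheses (hp : projection_elt adj p) (hu : unitary_elt adj u).

Lemma gen_semigroup1 : S 1.
Proof.
by rewrite -hu.1; apply: gen_semigroupM; apply: gen_semigroup_gen; rewrite !inE eqxx ?orbT.
Qed.

Lemma gen_semigroupX x n : S x -> S (x ^+ n).
Proof.
move=> Sx; elim: n => [|n IH]; first by rewrite expr0; apply: gen_semigroup1.
by rewrite exprS; apply: gen_semigroupM.
Qed.

Lemma gen_semigroup_adj x : S x -> S (adj x).
Proof.
apply: (@gen_semigroup_ind (fun x => S (adj x))) => [y | y z Sy' Sz'].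
  rewrite !inE => /or3P [] /eqP ->; [rewrite hp.2 | | rewrite adjK];
    by apply: gen_semigroup_gen; rewrite !inE eqxx ?orbT.
by rewrite adjM; apply: gen_semigroupM.
Qed.

Lemma inverse_semigroup_conj_comm k : inverse_semigroup S ->
  p * (u ^+ k * p * adj u ^+ k) = u ^+ k * p * adj u ^+ k * p.
Proof.
move=> invS; rewrite -adjX; have Uk := unitaryX k hu.
have [qq _] := projection_unitary_conj Uk hp.
have Su : S u by apply: gen_semigroup_gen; rewrite !inE eqxx orbT.
have Sp : S p by apply: gen_semigroup_gen; rewrite !inE eqxx.
apply: (inverse_semigroup_idem_comm invS) => //; last exact: hp.1.
apply: gen_semigroupM; [apply: gen_semigroupM | apply/gen_semigroup_adj];
  by [apply: gen_semigroupX |].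
Qed.

Definition upower (v : M) : Prop := exists k, v = u ^+ k \/ v = adj u ^+ k.

Lemma upower1 : upower 1.
Proof. by exists 0%N; left; rewrite expr0. Qed.

Lemma upowerU : upower u.
Proof. by exists 1%N; left; rewrite expr1. Qed.

Lemma upower_adj v : upower v -> upower (adj v).
Proof. by move=> [k [->|->]]; exists k; rewrite adjX ?adjK; [right | left]. Qed.

Lemma upowerM v w : upower v -> upower w -> upower (v * w).
Proof.
move=> [i [->|->]] [j [->|->]].
- by exists (i + j)%N; left; rewrite exprD.
- exact: expr_mul_cancel i j hu.1.
- by have [k [->|->]] := expr_mul_cancel i j hu.2; exists k; [right | left].
- by exists (i + j)%N; right; rewrite exprD.
Qed.

Lemma upower_unitary v : upower v -> unitary_elt adj v.
Proof.
by move=> [k [->|->]]; [|rewrite -adjX; apply: unitary_adj]; apply: unitaryX.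
Qed.

Definition pconj (q : M) : Prop := exists2 v, upower v & q = v * p * adj v.

Lemma pconj_projection q : pconj q -> projection_elt adj q.
Proof. by move=> [v /upower_unitary Uv ->]; apply: projection_unitary_conj. Qed.

Lemma pconj_conj v q : upower v -> pconj q -> pconj (v * q * adj v).
Proof.
by move=> Gv [w Gw ->]; exists (v * w); [apply: upowerM | rewrite adjM !mulrA].
Qed.

Lemma prod_closure_pconj_conj v f : upower v -> prod_closure pconj f ->
  prod_closure pconj (v * f * adj v).
Proof.
move=> Gv; have [vv' v'v] := upower_unitary Gv.
apply: (prod_closure_morph (phi := fun x => v * x * adj v)); last by move=> q; apply: pconj_conj.
  by move=> x y; apply: unitary_conjM.
by rewrite mulr1.
Qed.

Definition factorable (s : M) : Prop :=
  exists f v, [/\ prod_closure pconj f, upower v & s = f * v].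

Lemma gen_semigroup_factorable s : S s -> factorable s.
Proof.
apply: (@gen_semigroup_ind factorable) => [x | x y [f [v [Ff Gv ->]]] [f' [v' [Ff' Gv' ->]]]].
  rewrite !inE => /or3P [] /eqP ->.
  - exists p, 1; split; rewrite ?mulr1 //; last exact: upower1.
    by apply: prod_closure_gen; exists 1; rewrite ?adj1 ?mulr1 ?mul1r //; apply: upower1.
  - by exists 1, u; split; rewrite ?mul1r //; [apply: prod_closure1 | apply: upowerU].
  - exists 1, (adj u); split; rewrite ?mul1r //; first exact: prod_closure1.
    exact/upower_adj/upowerU.
have [_ v'v] := upower_unitary Gv.
exists (f * (v * f' * adj v)), (v * v'); split.
- by apply: prod_closureM Ff _; apply: prod_closure_pconj_conj.
- exact: upowerM.
- by rewrite !mulrA (mulr_inv1K _ v'v).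
Qed.

Section Converse.
Hypothesis conj_comm :
  forall k, p * (u ^+ k * p * adj u ^+ k) = u ^+ k * p * adj u ^+ k * p.

Lemma pconj_comm_p q : pconj q -> p * q = q * p.
Proof.
move=> [v [k [->|->]] ->]; first by rewrite adjX conj_comm.
have [ukK ukK'] := unitaryX k hu; rewrite adjX in ukK ukK'.
(* conjugate [conj_comm k] by [adj u ^+ k] *)
have := congr1 (fun x => adj u ^+ k * x * u ^+ k) (conj_comm k).
by rewrite /= adjX adjK !mulrA !(mulr_inv1K _ ukK') ukK' mul1r => ->.
Qed.

Lemma pconj_comm q1 q2 : pconj q1 -> pconj q2 -> q1 * q2 = q2 * q1.
Proof.
move=> [v Gv ->] [v' Gv' ->]; have [vv' v'v] := upower_unitary Gv.
have v'E : v' = v * (adj v * v') by rewrite mulrA vv' mul1r.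
move: (adj v * v') (upowerM (upower_adj Gv) Gv') v'E => w Gw ->.
have -> : v * w * p * adj (v * w) = v * (w * p * adj w) * adj v by rewrite adjM !mulrA.
by rewrite -!unitary_conjM // pconj_comm_p //; exists w.
Qed.

Lemma prod_closure_pconj_projection f : prod_closure pconj f -> projection_elt adj f.
Proof. exact: (prod_closure_projection pconj_projection (@pconj_comm)). Qed.

Lemma gen_semigroup_idem s : S s -> s * s = s -> prod_closure pconj s.
Proof.
move=> Ss ss; have [f [v [Ff Gv sE]]] := gen_semigroup_factorable Ss.
have [vv' v'v] := upower_unitary Gv.
have fvf : f * v * f = f.
  by have := congr1 (fun y => y * adj v) ss; rewrite /= sE !mulrA !(mulr_inv1K _ vv').
have Fg := prod_closureM Ff (prod_closure_pconj_conj Gv Ff).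
have gvE : f * (v * f * adj v) * v = f by rewrite !mulrA (mulr_inv1K _ v'v) fvf.
move: Fg gvE; move: (f * _) => g Fg gvE.
have [ff adjf] := prod_closure_pconj_projection Ff.
have [gg adjg] := prod_closure_pconj_projection Fg.
(* f = f f^* = (g v) (g v)^* = g g^* = g *)
have fg : f = g.
  transitivity (f * adj f); first by rewrite adjf ff.
  by rewrite -gvE adjM adjg !mulrA (mulr_inv1K _ vv') gg.
by rewrite sE {1}fg gvE.
Qed.

Lemma gen_semigroup_regular s : S s -> exists2 t, S t & semigroup_inverse s t.
Proof.
move=> Ss; exists (adj s); first exact: gen_semigroup_adj.
have [f [v [Ff Gv ->]]] := gen_semigroup_factorable Ss.
have [vv' _] := upower_unitary Gv; have [ff adjf] := prod_closure_pconj_projection Ff.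
by rewrite adjM adjf; split; rewrite !mulrA (mulr_inv1K _ vv') !(mulr_idemK _ ff) ?ff.
Qed.
End Converse.
End Generators.
End StarMonoid.

Theorem proposition3p9 (R : rcfType) (M : lalgType (complex R)) (adj : M -> M)
  (hstar : star_algebra adj) (p u : M)
  (hp : projection_elt adj p) (hu : unitary_elt adj u) :
  inverse_semigroup (gen_semigroup adj p u) <->
  (forall k : nat, ring_commutator p (u ^+ k * p * adj u ^+ k) = 0).
Proof.
have [adjK _ _ adjM adj1] := hstar.
split=> [invS k | comm_k].
  by apply/ring_commutator_eq0; apply: inverse_semigroup_conj_comm.
have conj_comm k := (ring_commutator_eq0 _ _).1 (comm_k k).
apply: regular_inverse_semigroup.
- exact: gen_semigroupM.
- exact: gen_semigroup_regular.
- move=> e f Se Sf ee ff.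
  by apply: (prod_closure_comm (pconj_comm adjK adjM adj1 hu conj_comm));
    apply: gen_semigroup_idem.
Qed.
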